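(* Let $(Q,\cdot)$ be a Ward quasigroup with $xx=e$ for all $x\in Q$, and let $\mathrm{ret}(Q,\cdot,e)=(Q,\circ)$ denote the group with $x\circ y=x\cdot(e\cdot y)$. (a) If $(Q,\cdot,\diamond)$ is a double magma for some magma $(Q,\diamond)$ having a unit $1$ (i.e. $1\diamond x=x\diamond 1=x$ for all $x$), then $x\diamond y=x\cdot(e\cdot y)$ for all $x,y$ (so $(Q,\diamond)=\mathrm{ret}(Q,\cdot,e)$) and $(Q,\cdot)$ is medial. (b) If $(Q,\cdot)$ is medial and $(Q,\circ,\star)$ is a double magma for some left cancellative magma $(Q,\star)$ which is unipotent (i.e. $x\star x=y\star y$ for all $x,y$) and contains a right unit $r$ (i.e. $x\star r=x$ for all $x$), then the operations $\cdot$ and $\star$ coincide.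
   Context: A Ward quasigroup is a quasigroup $(Q,\cdot)$ satisfying $(xz)(yz)=xy$ for all $x,y,z$; there is $e$ with $xx=e$ for all $x$, and $x\circ y=x\cdot(e\cdot y)$ defines a group with identity $e$. A triple $(Q,\ast,\star)$ is a double magma if $(x\ast y)\star(z\ast w)=(x\star z)\ast(y\star w)$ for all $x,y,z,w$. A magma is medial if $(xy)(zw)=(xz)(yw)$ for all $x,y,z,w$; left cancellative if $ax=ay$ implies $x=y$. *)

Definition quasigroup {Q : Type} (m : Q -> Q -> Q) : Prop :=
  (forall a b : Q, exists x, m a x = b /\ forall x', m a x' = b -> x' = x) /\
  (forall a b : Q, exists y, m y a = b /\ forall y', m y' a = b -> y' = y).

Definition ward_quasigroup {Q : Type} (m : Q -> Q -> Q) : Prop :=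
  quasigroup m /\ forall x y z : Q, m (m x z) (m y z) = m x y.

Definition ret {Q : Type} (m : Q -> Q -> Q) (e : Q) : Q -> Q -> Q :=
  fun x y => m x (m e y).

Definition double_magma {Q : Type} (a s : Q -> Q -> Q) : Prop :=
  forall x y z w : Q, s (a x y) (a z w) = a (s x z) (s y w).

Definition medial {Q : Type} (m : Q -> Q -> Q) : Prop :=
  forall x y z w : Q, m (m x y) (m z w) = m (m x z) (m y w).

Definition left_cancellative {Q : Type} (m : Q -> Q -> Q) : Prop :=
  forall a x y : Q, m a x = m a y -> x = y.

Definition unipotent {Q : Type} (m : Q -> Q -> Q) : Prop :=
  forall x y : Q, m x x = m y y.

Definition is_unit {Q : Type} (m : Q -> Q -> Q) (u : Q) : Prop :=
  forall x : Q, m u x = x /\ m x u = x.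

Definition is_right_unit {Q : Type} (m : Q -> Q -> Q) (r : Q) : Prop :=
  forall x : Q, m x r = x.


(* In a Ward quasigroup, x e = x, e (x y) = y x and e (e x) = x, so e is a
   two-sided identity of x o y = x (e y), and e y is the o-inverse of y.
   (a) Interchange of the product with a unital magma <> shows that e is a
   two-sided identity of <>, whence x <> y = (x e) <> (e (e y)) = x (e y);
   interchanging <> = o with the product once more makes o commutative
   (Eckmann-Hilton), and a Ward quasigroup with commutative retract is medial.
   (b) Interchange of o with * makes e a right unit of * and gives
   x * y = x o (e * y); unipotence gives y o (e * y) = y * y = e * e = e, so
   e * y = e y is the o-inverse of y and x * y = x o (e y) = x y. *)

Section InterchangeWithIdentity.
Context {Q : Type} {op star : Q -> Q -> Q} {u r : Q}.
Hypothesis op_u_l : forall a, op u a = a.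
Hypothesis op_u_r : forall a, op a u = a.
Hypothesis interchange : double_magma op star.
Hypothesis star_r : is_right_unit star r.

Lemma star_u_r a : star a u = a.
Proof.
  symmetry. transitivity (star (op a u) (op u r)).
  - now rewrite op_u_r, op_u_l, star_r.
  - now rewrite interchange, star_r, op_u_r.
Qed.

Lemma star_op_u x y : star x y = op x (star u y).
Proof.
  transitivity (star (op x u) (op u y)).
  - now rewrite op_u_r, op_u_l.
  - now rewrite interchange, star_u_r.
Qed.

Hypothesis star_unipotent : unipotent star.

Lemma op_star_u_diag a : op a (star u a) = u.
Proof. now rewrite <- star_op_u, (star_unipotent a u), star_u_r. Qed.

End InterchangeWithIdentity.

Section WardQuasigroup.
Context {Q : Type} {mul : Q -> Q -> Q} {e : Q}.
Hypothesis mulW : ward_quasigroup mul.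
Hypothesis mulxx : forall x, mul x x = e.

Lemma ward_law x y z : mul (mul x z) (mul y z) = mul x y.
Proof. apply (proj2 mulW). Qed.

Lemma ward_solve_l a b : exists x, mul a x = b.
Proof.
  destruct (proj1 (proj1 mulW) a b) as [x [Hx _]]. now exists x.
Qed.

Lemma ward_solve_r a b : exists y, mul y a = b.
Proof.
  destruct (proj2 (proj1 mulW) a b) as [y [Hy _]]. now exists y.
Qed.

Lemma ward_cancel_l a x y : mul a x = mul a y -> x = y.
Proof.
  intro Hxy. destruct (proj1 (proj1 mulW) a (mul a x)) as [c [_ Hc]].
  now rewrite (Hc x eq_refl), (Hc y (eq_sym Hxy)).
Qed.

Lemma mul_e_r a : mul a e = a.
Proof.
  destruct (ward_solve_l a a) as [z Hz].
  transitivity (mul (mul a z) (mul z z)).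
  - now rewrite Hz, mulxx.
  - now rewrite ward_law.
Qed.

Lemma mul_e_swap a b : mul e (mul a b) = mul b a.
Proof. rewrite <- (mulxx b). apply ward_law. Qed.

Lemma mul_eK a : mul e (mul e a) = a.
Proof.
  destruct (ward_solve_l e a) as [y <-]. now rewrite mul_e_swap, mul_e_r.
Qed.

Lemma ward_reassoc x y z : mul (mul x y) z = mul x (mul z (mul e y)).
Proof.
  destruct (ward_solve_r y z) as [c <-]. now rewrite !ward_law, mul_e_r.
Qed.

Lemma ret_e_l a : ret mul e e a = a.
Proof. apply mul_eK. Qed.

Lemma ret_e_r a : ret mul e a e = a.
Proof. unfold ret. now rewrite mulxx, mul_e_r. Qed.

Lemma ret_inverse_unique a b : ret mul e a b = e -> b = mul e a.
Proof.
  unfold ret. intro Hab.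
  assert (Heb : mul e b = a).
  { apply (ward_cancel_l a). now rewrite Hab, mulxx. }
  now rewrite <- Heb, mul_eK.
Qed.

Lemma medial_of_ret_comm :
  (forall x y, ret mul e x y = ret mul e y x) -> medial mul.
Proof.
  unfold ret. intros ret_comm x y z w.
  rewrite (ward_reassoc x y), (ward_reassoc x z). f_equal.
  rewrite (ret_comm (mul z w) y), (ret_comm (mul y w) z), !mul_e_swap.
  assert (Hwz : mul w z = mul (mul e z) (mul e w)).
  { now rewrite ret_comm, mul_eK. }
  now rewrite Hwz, <- ward_reassoc, ret_comm, mul_e_swap.
Qed.

Section UnitalInterchange.
Context {dia : Q -> Q -> Q} {one : Q}.
Hypothesis dia_unit : is_unit dia one.
Hypothesis interchange : double_magma mul dia.

Lemma dia_e_r a : dia a e = a.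
Proof.
  destruct (ward_solve_r one a) as [x <-].
  rewrite <- (mulxx one), interchange.
  now rewrite (proj2 (dia_unit x)), (proj1 (dia_unit one)).
Qed.

Lemma dia_e_l a : dia e a = a.
Proof.
  destruct (ward_solve_l one a) as [x <-].
  rewrite <- (mulxx one), interchange.
  now rewrite (proj1 (dia_unit one)), (proj1 (dia_unit x)).
Qed.

Lemma dia_eq_ret x y : dia x y = ret mul e x y.
Proof.
  pose proof (interchange x e e (mul e y)) as Hxy.
  now rewrite mul_e_r, mul_eK, dia_e_r, dia_e_l in Hxy.
Qed.

Lemma ret_comm_of_unital_interchange x y : ret mul e x y = ret mul e y x.
Proof.
  pose proof (interchange e x e y) as Hxy.
  rewrite dia_e_r, !dia_eq_ret in Hxy. unfold ret in *.
  rewrite mul_eK, ward_reassoc in Hxy.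
  symmetry. exact (ward_cancel_l e _ _ Hxy).
Qed.

End UnitalInterchange.

Lemma star_eq_mul_of_ret_interchange (star : Q -> Q -> Q) (r : Q) :
  unipotent star -> is_right_unit star r -> double_magma (ret mul e) star ->
  forall x y, star x y = mul x y.
Proof.
  intros star_unipotent star_r interchange x y.
  rewrite (star_op_u ret_e_l ret_e_r interchange star_r).
  rewrite (ret_inverse_unique _ _
             (op_star_u_diag ret_e_l ret_e_r interchange star_r star_unipotent y)).
  unfold ret. now rewrite mul_eK.
Qed.

End WardQuasigroup.

Theorem theorem3p5 (Q : Type) (mul : Q -> Q -> Q) (e : Q)
  (hW : ward_quasigroup mul) (he : forall x : Q, mul x x = e) :
  (forall (dia : Q -> Q -> Q) (one : Q),
      is_unit dia one -> double_magma mul dia ->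
      (forall x y : Q, dia x y = mul x (mul e y)) /\ medial mul) /\
  (medial mul ->
   forall (star : Q -> Q -> Q) (r : Q),
      left_cancellative star -> unipotent star -> is_right_unit star r ->
      double_magma (ret mul e) star ->
      forall x y : Q, star x y = mul x y).
Proof.
  split.
  - intros dia one dia_unit interchange. split.
    + exact (dia_eq_ret hW he dia_unit interchange).
    + exact (medial_of_ret_comm hW he
               (ret_comm_of_unital_interchange hW he dia_unit interchange)).
  -
    intros _ star r _.
    exact (star_eq_mul_of_ret_interchange hW he star r).
Qed.
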